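(* Let $\tau=(\xi_n)_{n\in\omega}$ be an infinite trace of tidy formulas. Then (1) there is a unique fixpoint formula $\xi=\eta x.\chi$ which occurs infinitely often on $\tau$ and satisfies $\xi\twoheadrightarrow_C^{\xi}\xi_n$ (i.e. $\xi_n\sqsubseteq_C\xi$) for cofinitely many $n$; (2) the number $\max\{\Omega_g(\phi)\mid \phi \text{ a fixpoint formula occurring infinitely often on }\tau\}$ is even iff $\eta=\nu$.
   Context: Syntax. Formulas of the modal $\mu$-calculus are taken in negation normal form: $\phi ::= \top \mid \bot \mid p \mid \neg p \mid x \mid \phi\land\phi\mid\phi\lor\phi\mid\Diamond\phi\mid\Box\phi\mid\mu x.\phi\mid\nu x.\phi$, where $p$ ranges over proposition letters and $x$ over an infinite supply of variables (which occur only positively). The formulas $\top,\bot,p,\neg p,x$ are atomic. $\mathrm{FV}(\phi)$ and $\mathrm{BV}(\phi)$ are the sets of free and bound variables of $\phi$; $\phi$ is tidy if $\mathrm{FV}(\phi)\cap\mathrm{BV}(\phi)=\varnothing$. A fixpoint formula is one of the form $\eta x.\chi$ with $\eta\in\{\mu,\nu\}$; it has type $\eta$, where $\mu$ counts as odd and $\nu$ as even parity, and $\bar\eta$ denotes the other operator. $\chi[\xi/x]$ is the result of replacing every free occurrence of $x$ in $\chi$ by $\xi$; $\xi$ is free for $x$ in $\chi$ if no free variable of $\xi$ becomes bound in $\chi[\xi/x]$. Traces and closure. The trace relation $\rightarrow_C$: $\phi_0\odot\phi_1\rightarrow_C\phi_i$ for $\odot\in\{\land,\lor\}$, $i\in\{0,1\}$;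 $\heartsuit\phi\rightarrow_C\phi$ for $\heartsuit\in\{\Diamond,\Box\}$; $\eta x.\phi\rightarrow_C\phi[\eta x.\phi/x]$; atomic formulas have no successors. $\twoheadrightarrow_C$ is the reflexive transitive closure of $\rightarrow_C$, $\mathrm{Clos}(\phi)=\{\psi\mid\phi\twoheadrightarrow_C\psi\}$ (a finite set), and a trace is a finite or infinite sequence of formulas with consecutive members related by $\rightarrow_C$. Write $\phi\equiv_C\psi$ iff $\phi\twoheadrightarrow_C\psi$ and $\psi\twoheadrightarrow_C\phi$; its equivalence classes are (closure) clusters, and $C(\phi)$ is the cluster of $\phi$. Free subformulas. $\phi\trianglelefteq_f\psi$ iff $\psi=\chi[\phi/y]$ for some formula $\chi$ and variable $y$ with $y\in\mathrm{FV}(\chi)$ and $\phi$ free for $y$ in $\chi$. Closure order. For a formula $\psi$, write $\rho\twoheadrightarrow_C^{\psi}\sigma$ iff there is a trace $\rho=\chi_0\rightarrow_C\cdots\rightarrow_C\chi_n=\sigma$ ($n\ge0$) with $\psi\trianglelefteq_f\chi_i$ for all $i\le n$. For fixpoint formulas $\phi,\psi$: $\phi\sqsubseteq_C\psi$ iff $\psi\twoheadrightarrow_C^{\psi}\phi$; $\phi\sqsubset_C\psi$ iff $\phi\sqsubseteq_C\psi$ and $\psi\not\sqsubseteq_C\phi$. Chains. An alternating $\sqsubset_C$-chain of length $n$ is a sequence $\eta_1x_1.\chi_1,\dots,\eta_nx_n.\chi_n$ of tidy fixpoint formulas with $\eta_ix_i.\chi_i\sqsubset_C\eta_{i+1}x_{i+1}.\chi_{i+1}$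 and $\eta_{i+1}=\bar\eta_i$ for all $i<n$; it starts at the first and leads up to the last formula. For a tidy fixpoint formula $\xi$, $h^\uparrow(\xi)$ is the maximal length of an alternating $\sqsubset_C$-chain starting at $\xi$. For a cluster $C$, $\mathit{cd}(C)$ is the maximal length of an alternating $\sqsubset_C$-chain inside $C$. Global priority map. For a tidy fixpoint formula $\psi=\eta y.\phi$ let $d=\mathit{cd}(C(\psi))-h^\uparrow(\psi)$ and set $\Omega_g(\psi)=d$ if $d$ has parity $\eta$ and $\Omega_g(\psi)=d+1$ otherwise; $\Omega_g$ is undefined on non-fixpoint formulas. *)

From Stdlib Require Import Arith List ZArith Relations ClassicalEpsilon.
Import ListNotations.

Inductive fptype := mu | nu.
Definition flip (e : fptype) : fptype := match e with mu => nu | nu => mu end.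

Inductive form : Type :=
| Top | Bot
| PLit (p : nat) | NLit (p : nat)
| Var (x : nat)
| And (a b : form) | Or (a b : form)
| Dia (a : form) | Box (a : form)
| Fp (e : fptype) (x : nat) (a : form).

Fixpoint fv (f : form) : list nat :=
  match f with
  | Var x => [x]
  | And a b | Or a b => fv a ++ fv b
  | Dia a | Box a => fv a
  | Fp _ x a => filter (fun z => negb (Nat.eqb z x)) (fv a)
  | _ => []
  end.

Fixpoint bv (f : form) : list nat :=
  match f with
  | And a b | Or a b => bv a ++ bv b
  | Dia a | Box a => bv a
  | Fp _ x a => x :: bv a
  | _ => []
  end.

Definition tidy (f : form) : Prop := forall x, In x (fv f) -> ~ In x (bv f).

Definition isfix (f : form) : Prop := exists e x a, f = Fp e x a.

(* subst chi xi x  =  chi[xi/x] : replace every free occurrence of x in chi by xi *)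
Fixpoint subst (chi xi : form) (x : nat) : form :=
  match chi with
  | Var y => if Nat.eqb y x then xi else Var y
  | And a b => And (subst a xi x) (subst b xi x)
  | Or a b => Or (subst a xi x) (subst b xi x)
  | Dia a => Dia (subst a xi x)
  | Box a => Box (subst a xi x)
  | Fp e y a => if Nat.eqb y x then Fp e y a else Fp e y (subst a xi x)
  | f => f
  end.

(* xi is free for y in chi: no free variable of xi gets bound in chi[xi/y] *)
Fixpoint freefor (xi : form) (y : nat) (chi : form) : Prop :=
  match chi with
  | And a b | Or a b => freefor xi y a /\ freefor xi y b
  | Dia a | Box a => freefor xi y a
  | Fp _ z a => z = y \/ ((~ In y (fv a) \/ ~ In z (fv xi)) /\ freefor xi y a)
  | _ => True
  end.

Inductive step : form -> form -> Prop :=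
| st_andl a b : step (And a b) a
| st_andr a b : step (And a b) b
| st_orl a b : step (Or a b) a
| st_orr a b : step (Or a b) b
| st_dia a : step (Dia a) a
| st_box a : step (Box a) a
| st_fp e x a : step (Fp e x a) (subst a (Fp e x a) x).

Definition steps : form -> form -> Prop := clos_refl_trans form step.

Definition clos_eq (phi psi : form) : Prop := steps phi psi /\ steps psi phi.

Definition fsub (phi psi : form) : Prop :=
  exists chi y, psi = subst chi phi y /\ In y (fv chi) /\ freefor phi y chi.

Inductive steps_in (psi : form) : form -> form -> Prop :=
| si_refl rho : fsub psi rho -> steps_in psi rho rho
| si_step rho chi sigma : fsub psi rho -> step rho chi -> steps_in psi chi sigma ->
    steps_in psi rho sigma.

Definition sqle (phi psi : form) : Prop := isfix phi /\ isfix psi /\ steps_in psi psi phi.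
Definition sqlt (phi psi : form) : Prop := sqle phi psi /\ ~ sqle psi phi.

Definition alternates (a b : form) : Prop :=
  exists e x y c d, a = Fp e x c /\ b = Fp (flip e) y d.

Fixpoint chain_rel (l : list form) : Prop :=
  match l with
  | a :: ((b :: _) as t) => sqlt a b /\ alternates a b /\ chain_rel t
  | _ => True
  end.

Definition alt_chain (l : list form) : Prop :=
  Forall (fun f => tidy f /\ isfix f) l /\ chain_rel l.

(* maximum of a set of naturals / integers (classical choice; the paper's
   maxima are well defined) *)
Definition natmax (P : nat -> Prop) : nat :=
  epsilon (inhabits 0) (fun n => P n /\ forall m, P m -> m <= n).
Definition zmax (P : Z -> Prop) : Z :=
  epsilon (inhabits 0%Z) (fun n => P n /\ forall m, P m -> (m <= n)%Z).

Definition hup (xi : form) : nat :=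
  natmax (fun n => exists l, alt_chain l /\ length l = n /\ hd_error l = Some xi).

(* cd(C(psi)) : the cluster is represented by any of its members psi *)
Definition cd (psi : form) : nat :=
  natmax (fun n => exists l, alt_chain l /\ length l = n /\ Forall (fun f => clos_eq f psi) l).

Definition is_nu (e : fptype) : bool := match e with nu => true | mu => false end.

(* global priority map (junk value 0 on non-fixpoint formulas, where it is undefined) *)
Definition Omega_g (psi : form) : Z :=
  match psi with
  | Fp e _ _ =>
      let d := (Z.of_nat (cd psi) - Z.of_nat (hup psi))%Z in
      if Bool.eqb (Z.even d) (is_nu e) then d else (d + 1)%Z
  | _ => 0%Z
  end.

Definition inf_often (tau : nat -> form) (phi : form) : Prop :=
  forall N, exists n, N <= n /\ tau n = phi.

Definition is_trace (tau : nat -> form) : Prop := forall n, step (tau n) (tau (S n)).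

(** - Free subformulas: [fsub A B] is characterised syntactically by [occurs A B] ([A]
      occurs in [B] without capture of its free variables), hence is transitive and,
      as it strictly increases size unless [A = B], antisymmetric.
    - Finiteness: every formula reachable from a tidy formula lies in the explicit finite
      list [closure] (instances of its subformulas under the environments of the
      enclosing fixpoints), so eventually every member of [tau] recurs infinitely often.
    - The dominant formula [xi] is a recurring fixpoint formula of least size.  A step
      creates a new free occurrence of [xi] only by unfolding a strictly smaller fixpoint
      formula, which is again recurring; so once [xi] appears it occurs freely in every
      later member of [tau] and guards the trace.  Uniqueness follows by antisymmetry.
    - Priorities: every other recurring fixpoint formula [phi] is in the cluster of [xi]
      and strictly below it; prepending [phi] to a maximal alternating chain from [xi]
      (or substituting it for [xi] when the types agree) gives [Omega_g phi <= Omega_g xi]. *)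

From Stdlib Require Import ZArith Lia List Relations Wf_nat Classical
  FunctionalExtensionality PropExtensionality ClassicalEpsilon.
Import ListNotations.

Lemma in_remove_var y x l :
  In y (filter (fun z => negb (Nat.eqb z x)) l) <-> In y l /\ y <> x.
Proof. rewrite filter_In, Bool.negb_true_iff, Nat.eqb_neq. tauto. Qed.

Lemma subst_notfree t F y : ~ In y (fv t) -> subst t F y = t.
Proof.
  induction t; simpl; intros H; auto.
  - destruct (Nat.eqb_spec x y); [subst; tauto | auto].
  - rewrite IHt1, IHt2; auto; intro; apply H, in_or_app; auto.
  - rewrite IHt1, IHt2; auto; intro; apply H, in_or_app; auto.
  - rewrite IHt; auto.
  - rewrite IHt; auto.
  - destruct (Nat.eqb_spec x y); auto.
    rewrite IHt; auto. intro; apply H, in_remove_var; auto.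
Qed.

Lemma freefor_notfree t F y : ~ In y (fv t) -> freefor F y t.
Proof.
  induction t; simpl; intros H; auto;
    try (split; [apply IHt1 | apply IHt2]; intro; apply H, in_or_app; auto).
  destruct (Nat.eq_dec x y); auto.
  right. split; [left|apply IHt]; intro; apply H, in_remove_var; auto.
Qed.

Fixpoint size (f : form) : nat :=
  match f with
  | And a b | Or a b => S (size a + size b)
  | Dia a | Box a | Fp _ _ a => S (size a)
  | _ => 1
  end.

Lemma size_subst_le c F z : In z (fv c) -> size F <= size (subst c F z).
Proof.
  induction c; simpl; intros H; try contradiction.
  - destruct H as [<-|[]]. rewrite Nat.eqb_refl; lia.
  - apply in_app_or in H as [H|H]; [specialize (IHc1 H) | specialize (IHc2 H)]; lia.
  - apply in_app_or in H as [H|H]; [specialize (IHc1 H) | specialize (IHc2 H)]; lia.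
  - specialize (IHc H); lia.
  - specialize (IHc H); lia.
  - apply in_remove_var in H as [H Hne].
    destruct (Nat.eqb_spec x z); [congruence|]. simpl. specialize (IHc H); lia.
Qed.

Lemma size_subst_lt c F z : In z (fv c) -> c <> Var z -> size F < size (subst c F z).
Proof.
  destruct c; simpl; intros H Hne; try contradiction.
  - destruct H as [<-|[]]. congruence.
  - apply in_app_or in H as [H|H];
      [pose proof (size_subst_le c1 F z H) | pose proof (size_subst_le c2 F z H)]; lia.
  - apply in_app_or in H as [H|H];
      [pose proof (size_subst_le c1 F z H) | pose proof (size_subst_le c2 F z H)]; lia.
  - pose proof (size_subst_le c F z H); lia.
  - pose proof (size_subst_le c F z H); lia.
  - apply in_remove_var in H as [H Hne'].
    destruct (Nat.eqb_spec x z); [congruence|]. simpl.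
    pose proof (size_subst_le c F z H); lia.
Qed.

(** [occurs A B]: [A] is a subformula of [B] at a position where no free variable of
    [A] is captured by a binder of [B].  This is the syntactic form of [fsub A B]. *)

Inductive occurs (A : form) : form -> Prop :=
| occ_refl : occurs A A
| occ_andl a b : occurs A a -> occurs A (And a b)
| occ_andr a b : occurs A b -> occurs A (And a b)
| occ_orl a b : occurs A a -> occurs A (Or a b)
| occ_orr a b : occurs A b -> occurs A (Or a b)
| occ_dia a : occurs A a -> occurs A (Dia a)
| occ_box a : occurs A a -> occurs A (Box a)
| occ_fp e z a : occurs A a -> ~ In z (fv A) -> occurs A (Fp e z a).

Lemma occurs_fv A B : occurs A B -> forall x, In x (fv A) -> In x (fv B).
Proof.
  induction 1; simpl; intros; auto; try (apply in_or_app; auto).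
  apply in_remove_var. split; auto. intro; subst; tauto.
Qed.

Lemma occurs_trans A B C : occurs A B -> occurs B C -> occurs A C.
Proof.
  intros HAB H; induction H; try (constructor; auto; fail); auto.
  constructor; auto. intro Hz. apply H0. eapply occurs_fv; eauto.
Qed.

Lemma occurs_size A B : occurs A B -> A = B \/ size A < size B.
Proof. induction 1; auto; right; simpl; destruct IHoccurs; subst; lia. Qed.

Lemma subst_whole a F z :
  a <> Var z -> size F < size (subst a F z) \/ (subst a F z = a /\ ~ In z (fv a)).
Proof.
  intros Hne. destruct (in_dec Nat.eq_dec z (fv a)) as [Hz|Hz].
  - left; apply size_subst_lt; auto.
  - right; split; auto. apply subst_notfree; auto.
Qed.

Lemma occurs_notfree X a : occurs X a -> forall z, ~ In z (fv a) -> ~ In z (fv X).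
Proof. intros H z Hz Hx; apply Hz; eapply occurs_fv; eauto. Qed.

Lemma occurs_subst_inv X a F z : occurs X (subst a F z) ->
  occurs X F \/ (occurs X a /\ ~ In z (fv X)) \/ size F < size X.
Proof.
  assert (Hsame : forall a, ~ In z (fv a) -> occurs X (subst a F z) ->
            occurs X a /\ ~ In z (fv X)).
  { intros a0 Hz H. rewrite subst_notfree in H by auto. split; auto.
    eapply occurs_notfree; eauto. }
  assert (Hwhole : forall a, a <> Var z -> X = subst a F z ->
            (occurs X a /\ ~ In z (fv X)) \/ size F < size X).
  { intros a0 Hne ->. destruct (subst_whole a0 F z Hne) as [Hlt|[-> Hz]]; auto.
    left; split; [constructor | auto]. }
  induction a; intros H;
    try (right; left; apply Hsame; [simpl; tauto | exact H]).
  - simpl in H. destruct (Nat.eqb_spec x z) as [->|Hne]; auto.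
    right; left. apply (Hsame (Var x)); simpl; [intros [E|[]]; congruence | ].
    simpl; rewrite (proj2 (Nat.eqb_neq x z) Hne); auto.
  - simpl in H; inversion H; subst.
    + right. apply (Hwhole (And a1 a2)); [discriminate | reflexivity].
    + destruct (IHa1 H1) as [?|[[? ?]|?]]; auto. right; left; split; auto; constructor; auto.
    + destruct (IHa2 H1) as [?|[[? ?]|?]]; auto. right; left; split; auto; apply occ_andr; auto.
  - simpl in H; inversion H; subst.
    + right. apply (Hwhole (Or a1 a2)); [discriminate | reflexivity].
    + destruct (IHa1 H1) as [?|[[? ?]|?]]; auto. right; left; split; auto; constructor; auto.
    + destruct (IHa2 H1) as [?|[[? ?]|?]]; auto. right; left; split; auto; apply occ_orr; auto.
  - simpl in H; inversion H; subst.
    + right. apply (Hwhole (Dia a)); [discriminate | reflexivity].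
    + destruct (IHa H1) as [?|[[? ?]|?]]; auto. right; left; split; auto; constructor; auto.
  - simpl in H; inversion H; subst.
    + right. apply (Hwhole (Box a)); [discriminate | reflexivity].
    + destruct (IHa H1) as [?|[[? ?]|?]]; auto. right; left; split; auto; constructor; auto.
  - simpl in H. destruct (Nat.eqb_spec x z) as [->|Hne].
    + right; left. apply (Hsame (Fp e z a)); [simpl; rewrite in_remove_var; tauto|].
      simpl; rewrite Nat.eqb_refl; auto.
    + inversion H; subst.
      * right. apply (Hwhole (Fp e x a)); [discriminate|].
        simpl; rewrite (proj2 (Nat.eqb_neq x z) Hne); reflexivity.
      * destruct (IHa H2) as [?|[[? ?]|?]]; auto. right; left; split; auto; constructor; auto.
Qed.

(** [fsub] coincides with [occurs]: one direction by induction on the context [chi],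
    the other by abstracting the occurrence with a variable fresh for [B]. *)

Lemma fsub_occurs A B : fsub A B -> occurs A B.
Proof.
  intros (chi & y & -> & Hin & Hff). revert Hin Hff.
  induction chi; simpl; intros Hin Hff; try contradiction.
  - destruct Hin as [<-|[]]. rewrite Nat.eqb_refl. constructor.
  - destruct Hff. apply in_app_or in Hin as [];[apply occ_andl|apply occ_andr]; auto.
  - destruct Hff. apply in_app_or in Hin as [];[apply occ_orl|apply occ_orr]; auto.
  - constructor; auto.
  - constructor; auto.
  - apply in_remove_var in Hin as [Hin Hne].
    destruct (Nat.eqb_spec x y); [congruence|].
    destruct Hff as [->|[[H|H] Hf]]; try congruence; try contradiction.
    constructor; auto.
Qed.

Definition fresh (f : form) : nat := S (list_max (fv f ++ bv f)).

Lemma fresh_spec f : ~ In (fresh f) (fv f) /\ ~ In (fresh f) (bv f).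
Proof.
  assert (Hout : ~ In (fresh f) (fv f ++ bv f)).
  { intros H. pose proof (proj1 (list_max_le (fv f ++ bv f) _) (le_n _)) as Hle.
    rewrite Forall_forall in Hle. apply Hle in H. unfold fresh in H. lia. }
  split; intro; apply Hout, in_or_app; auto.
Qed.

Lemma occurs_context A B : occurs A B -> forall y, ~ In y (fv B) -> ~ In y (bv B) ->
  exists chi, B = subst chi A y /\ In y (fv chi) /\ freefor A y chi.
Proof.
  assert (Hnl : forall (y : nat) l1 l2, ~ In y (l1 ++ l2) -> ~ In y l1 /\ ~ In y l2).
  { intros y l1 l2 H; split; intro; apply H, in_or_app; auto. }
  induction 1; simpl; intros y Hf Hb;
    try (apply Hnl in Hf as [Hf1 Hf2]; apply Hnl in Hb as [Hb1 Hb2]).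
  - exists (Var y). simpl. rewrite Nat.eqb_refl. auto.
  - destruct (IHoccurs y Hf1 Hb1) as (c & -> & ? & ?).
    exists (And c b); simpl; rewrite (subst_notfree b) by auto.
    repeat split; auto using in_or_app, freefor_notfree.
  - destruct (IHoccurs y Hf2 Hb2) as (c & -> & ? & ?).
    exists (And a c); simpl; rewrite (subst_notfree a) by auto.
    repeat split; auto using in_or_app, freefor_notfree.
  - destruct (IHoccurs y Hf1 Hb1) as (c & -> & ? & ?).
    exists (Or c b); simpl; rewrite (subst_notfree b) by auto.
    repeat split; auto using in_or_app, freefor_notfree.
  - destruct (IHoccurs y Hf2 Hb2) as (c & -> & ? & ?).
    exists (Or a c); simpl; rewrite (subst_notfree a) by auto.
    repeat split; auto using in_or_app, freefor_notfree.
  - destruct (IHoccurs y) as (c & -> & ? & ?); auto. exists (Dia c); simpl; auto.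
  - destruct (IHoccurs y) as (c & -> & ? & ?); auto. exists (Box c); simpl; auto.
  - assert (z <> y) by (intro; subst; apply Hb; left; auto).
    destruct (IHoccurs y) as (c & -> & ? & ?);
      [intro; apply Hf, in_remove_var; auto | auto |].
    exists (Fp e z c); simpl. rewrite (proj2 (Nat.eqb_neq z y) H1).
    repeat split; auto. apply in_remove_var; auto.
Qed.

Lemma occurs_fsub A B : occurs A B -> fsub A B.
Proof.
  intros H. destruct (fresh_spec B) as [Hf Hb].
  destruct (occurs_context A B H (fresh B) Hf Hb) as (c & ? & ? & ?).
  exists c, (fresh B); auto.
Qed.

Lemma fsub_refl A : fsub A A.
Proof. apply occurs_fsub; constructor. Qed.

Lemma fsub_trans A B C : fsub A B -> fsub B C -> fsub A C.
Proof. intros; apply occurs_fsub; eapply occurs_trans; apply fsub_occurs; eauto. Qed.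

Lemma fsub_size A B : fsub A B -> A = B \/ size A < size B.
Proof. intros; apply occurs_size, fsub_occurs; auto. Qed.

Lemma fsub_antisym A B : fsub A B -> fsub B A -> A = B.
Proof.
  intros H1 H2; apply fsub_size in H1, H2.
  destruct H1; auto. destruct H2; auto. lia.
Qed.

Lemma steps_in_last p r s : steps_in p r s -> fsub p s.
Proof. induction 1; auto. Qed.

Lemma steps_in_weaken A B r s : fsub A B -> steps_in B r s -> steps_in A r s.
Proof.
  intros HAB; induction 1; econstructor; eauto using fsub_trans.
Qed.

Lemma steps_in_trans A r B C : steps_in A r B -> steps_in B B C -> steps_in A r C.
Proof.
  induction 1; intros; [eapply steps_in_weaken | econstructor]; eauto.
Qed.

(** An environment maps variables to the fixpoint formulas
    that bind them; [inst f env] instantiates the free variables of [f] accordingly, and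
    [closure f env] lists the instances of all subformulas of [f] under the environments
    met on the way down.  Unfolding a fixpoint formula amounts to extending the
    environment ([subst_inst]), so the list is closed under [step] ([closure_closed]). *)

Fixpoint lookup (y : nat) (env : list (nat * form)) : option form :=
  match env with
  | [] => None
  | (z, G) :: r => if Nat.eqb y z then Some G else lookup y r
  end.

Definition unbind (x : nat) (env : list (nat * form)) : list (nat * form) :=
  filter (fun p => negb (Nat.eqb (fst p) x)) env.

Fixpoint inst (f : form) (env : list (nat * form)) : form :=
  match f with
  | Var y => match lookup y env with Some G => G | None => Var y end
  | And a b => And (inst a env) (inst b env)
  | Or a b => Or (inst a env) (inst b env)
  | Dia a => Dia (inst a env)
  | Box a => Box (inst a env)
  | Fp e x a => Fp e x (inst a (unbind x env))
  | _ => f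
  end.

Fixpoint closure (f : form) (env : list (nat * form)) : list form :=
  inst f env ::
  match f with
  | And a b | Or a b => closure a env ++ closure b env
  | Dia a | Box a => closure a env
  | Fp e x a => closure a ((x, Fp e x (inst a (unbind x env))) :: env)
  | _ => []
  end.

Lemma lookup_in y env G : lookup y env = Some G -> In (y, G) env.
Proof.
  induction env as [|[z H] r IH]; simpl; try discriminate.
  destruct (Nat.eqb_spec y z); intros E; auto. inversion E; subst; auto.
Qed.

Lemma lookup_none y env : lookup y env = None -> ~ In y (map fst env).
Proof.
  induction env as [|[z H] r IH]; simpl; auto.
  destruct (Nat.eqb_spec y z); intros E; try discriminate. intros [->|?]; auto.
  apply IH; auto.
Qed.

Lemma lookup_unbind x y env :
  lookup y (unbind x env) = if Nat.eqb y x then None else lookup y env.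
Proof.
  induction env as [|[z H] r IH]; simpl; [destruct (y =? x); auto|].
  destruct (Nat.eqb_spec z x); simpl.
  - subst. rewrite IH. destruct (Nat.eqb_spec y x); auto.
  - destruct (Nat.eqb_spec y z); subst; auto.
    rewrite (proj2 (Nat.eqb_neq z x) n); auto.
Qed.

Lemma unbind_in x env y G : In (y, G) (unbind x env) -> In (y, G) env /\ y <> x.
Proof. unfold unbind; rewrite filter_In; simpl. rewrite Bool.negb_true_iff, Nat.eqb_neq. auto. Qed.

Lemma unbind_idem x env : unbind x (unbind x env) = unbind x env.
Proof.
  induction env as [|[z H] r IH]; simpl; auto.
  destruct (Nat.eqb z x) eqn:E; simpl; auto. rewrite E; simpl. f_equal; auto.
Qed.

Lemma unbind_comm x y env : unbind x (unbind y env) = unbind y (unbind x env).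
Proof.
  induction env as [|[z H] r IH]; simpl; auto.
  destruct (Nat.eqb z y) eqn:E1; destruct (Nat.eqb z x) eqn:E2; simpl;
    try rewrite E1; try rewrite E2; simpl; try rewrite IH; auto.
Qed.

Lemma subst_inst a : forall env x F, (forall y G, In (y, G) env -> ~ In x (fv G)) ->
  subst (inst a (unbind x env)) F x = inst a ((x, F) :: env).
Proof.
  induction a; intros env y F Henv; simpl; auto; try (f_equal; auto; fail).
  - rewrite lookup_unbind. destruct (Nat.eqb_spec x y) as [->|Hne].
    + simpl. rewrite Nat.eqb_refl; auto.
    + destruct (lookup x env) eqn:E.
      * apply subst_notfree. apply lookup_in in E. eapply Henv; eauto.
      * simpl. rewrite (proj2 (Nat.eqb_neq x y) Hne); auto.
  - destruct (Nat.eqb_spec x y) as [->|Hne].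
    + rewrite Nat.eqb_refl; simpl. rewrite unbind_idem; auto.
    + rewrite (proj2 (Nat.eqb_neq y x)) by auto. simpl. f_equal.
      rewrite unbind_comm. apply IHa. intros z G HG; apply unbind_in in HG as [HG _]. eauto.
Qed.

Lemma fv_inst f : forall env z, In z (fv (inst f env)) ->
  (In z (fv f) /\ ~ In z (map fst env)) \/ (exists y G, In (y, G) env /\ In z (fv G)).
Proof.
  induction f; intros env z; simpl; try tauto;
    try (intros H; apply in_app_or in H as [H|H];
         [destruct (IHf1 env z H) as [[? ?]|?]; auto; left; split; auto; apply in_or_app; auto
         |destruct (IHf2 env z H) as [[? ?]|?]; auto; left; split; auto; apply in_or_app; auto];
         fail);
    try (intros H; destruct (IHf env z H) as [[? ?]|?]; auto; fail).
  - destruct (lookup x env) eqn:E; intros H.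
    + right. exists x, f. split; auto. apply lookup_in; auto.
    + left. simpl in H. destruct H as [<-|[]]. split; auto. apply lookup_none; auto.
  - intros H. rewrite in_remove_var in H. destruct H as [H Hn].
    destruct (IHf _ _ H) as [[H1 H2]|(y & G & HG & Hz)].
    + left. split; [apply in_remove_var; auto|]. intros Hm. apply H2.
      apply in_map_iff in Hm as ([w G] & Hw & HG). simpl in Hw; subst.
      apply in_map_iff. exists (z, G); split; auto. unfold unbind; apply filter_In; split; auto.
      simpl. apply Bool.negb_true_iff, Nat.eqb_neq; auto.
    + right. apply unbind_in in HG as [HG _]. eauto.
Qed.

(** The invariant under which instantiation does not capture variables: no bound variable
    of [f] is free in a value of [env], and bound variables occurring free in [f] are
    bound by [env]. *)

Definition env_ok (f : form) (env : list (nat * form)) : Prop :=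
  forall z, In z (bv f) -> (forall y G, In (y, G) env -> ~ In z (fv G)) /\
                            (In z (fv f) -> In z (map fst env)).

Lemma env_ok_split g f1 f2 env : bv g = bv f1 ++ bv f2 -> fv g = fv f1 ++ fv f2 ->
  env_ok g env -> env_ok f1 env /\ env_ok f2 env.
Proof.
  intros Hb Hf Hok. unfold env_ok in *. rewrite Hb, Hf in Hok.
  split; intros z Hz; destruct (Hok z) as [Hval Hbnd]; auto using in_or_app.
Qed.

Lemma env_ok_binder e x f env :
  env_ok (Fp e x f) env -> env_ok f ((x, inst (Fp e x f) env) :: env).
Proof.
  intros Hok z Hz. destruct (Hok z) as [Hval Hbnd]; [simpl; auto|]. split.
  - intros y G [HG|HG]; eauto.
    injection HG as <- <-. intros Hf.
    destruct (fv_inst (Fp e x f) env z Hf) as [[H1 H2]|(y' & G' & HG' & Hz')].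
    + apply H2, Hbnd, H1.
    + eapply Hval; eauto.
  - intros Hzf. simpl. destruct (Nat.eq_dec x z); auto. right. apply Hbnd, in_remove_var; auto.
Qed.

Lemma closure_head f env : In (inst f env) (closure f env).
Proof. destruct f; simpl; left; auto. Qed.

Lemma unfold_inst e x f env s : env_ok (Fp e x f) env -> step (inst (Fp e x f) env) s ->
  s = inst f ((x, inst (Fp e x f) env) :: env).
Proof.
  intros Hok Hs. simpl in Hs |- *. inversion Hs; subst.
  apply subst_inst, (Hok x); simpl; auto.
Qed.

Lemma closure_closed f : forall env, env_ok f env ->
  forall rho sigma, In rho (closure f env) -> step rho sigma ->
  In sigma (closure f env) \/ In rho (map snd env).
Proof.
  induction f; intros env Hok rho sigma Hin Hst; simpl in Hin |- *;
    try (destruct Hin as [<-|[]]; inversion Hst; fail).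
  - destruct Hin as [<-|[]]. destruct (lookup x env) eqn:E; [|inversion Hst].
    right. apply lookup_in in E. apply in_map_iff. exists (x, f); auto.
  - destruct (env_ok_split (And f1 f2) f1 f2 env eq_refl eq_refl Hok) as [Hok1 Hok2].
    destruct Hin as [<-|Hin].
    + left; right. inversion Hst; subst; apply in_or_app; auto using closure_head.
    + apply in_app_or in Hin as [Hin|Hin];
        [destruct (IHf1 env Hok1 rho sigma Hin Hst) | destruct (IHf2 env Hok2 rho sigma Hin Hst)];
        auto using in_or_app.
  - destruct (env_ok_split (Or f1 f2) f1 f2 env eq_refl eq_refl Hok) as [Hok1 Hok2].
    destruct Hin as [<-|Hin].
    + left; right. inversion Hst; subst; apply in_or_app; auto using closure_head.
    + apply in_app_or in Hin as [Hin|Hin];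
        [destruct (IHf1 env Hok1 rho sigma Hin Hst) | destruct (IHf2 env Hok2 rho sigma Hin Hst)];
        auto using in_or_app.
  - destruct Hin as [<-|Hin].
    + left; right. inversion Hst; subst; apply closure_head.
    + destruct (IHf env Hok rho sigma Hin Hst); auto.
  - destruct Hin as [<-|Hin].
    + left; right. inversion Hst; subst; apply closure_head.
    + destruct (IHf env Hok rho sigma Hin Hst); auto.
  - pose proof (env_ok_binder e x f env Hok) as Hok'.
    assert (Hunfold : forall s, step (inst (Fp e x f) env) s ->
                      In s (closure f ((x, inst (Fp e x f) env) :: env))).
    { intros s Hs. rewrite (unfold_inst e x f env s Hok Hs). apply closure_head. }
    simpl in Hok', Hunfold.
    destruct Hin as [<-|Hin]; [left; right; auto|].
    destruct (IHf _ Hok' rho sigma Hin Hst) as [?|[<-|?]]; auto.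
Qed.

Lemma inst_nil f : inst f [] = f.
Proof. induction f; simpl; try f_equal; auto. Qed.

Lemma occurs_gained_by_unfolding r s X :
  step r s -> occurs X s -> ~ occurs X r -> isfix r /\ size r < size X.
Proof.
  intros Hst Hs Hr. destruct Hst;
    try (exfalso; apply Hr; constructor; auto; fail).
  - split; [do 3 eexists; reflexivity|].
    destruct (occurs_subst_inv _ _ _ _ Hs) as [H|[[H1 H2]|H]]; auto;
      exfalso; apply Hr; [exact H | constructor; auto].
Qed.

Lemma backward_propagation (P : nat -> Prop) k :
  (forall j, k <= j -> P (S j) -> P j) -> forall d, P (k + d) -> P k.
Proof.
  intros Hback d. induction d as [|d IH]; intros Hd.
  - rewrite Nat.add_0_r in Hd; exact Hd.
  - apply IH, Hback; [lia|]. rewrite <- Nat.add_succ_r; exact Hd.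
Qed.

Section Trace.
Variable tau : nat -> form.
Hypothesis Htrace : is_trace tau.

Lemma trace_steps i j : i <= j -> steps (tau i) (tau j).
Proof.
  intros Hij. replace j with (i + (j - i)) by lia. induction (j - i) as [|d IH].
  - rewrite Nat.add_0_r; apply rt_refl.
  - eapply rt_trans; [exact IH|]. rewrite Nat.add_succ_r. apply rt_step, Htrace.
Qed.

Lemma trace_in_closure : tidy (tau 0) -> forall n, In (tau n) (closure (tau 0) []).
Proof.
  intros Ht. assert (Hok : env_ok (tau 0) []).
  { intros z Hz. split; [intros y G []|]. intros Hf. exfalso; exact (Ht z Hf Hz). }
  induction n as [|n IH].
  - pose proof (closure_head (tau 0) []) as H; rewrite inst_nil in H; exact H.
  - destruct (closure_closed _ _ Hok _ _ IH (Htrace n)) as [?|[]]; auto.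
Qed.

Lemma eventually_recurring (L : list form) :
  exists N, forall n, N <= n -> In (tau n) L -> inf_often tau (tau n).
Proof.
  induction L as [|G L [N IH]].
  - exists 0; intros n _ [].
  - destruct (classic (inf_often tau G)) as [Hi|Hi].
    + exists N; intros n Hn [<-|Hin]; auto.
    + unfold inf_often in Hi. apply not_all_ex_not in Hi as [B HB].
      exists (max N B). intros n Hn [Hg|Hin].
      * exfalso; apply HB; exists n; split; [lia|auto].
      * apply IH; auto; lia.
Qed.

(** Steps other than unfoldings decrease the size, so fixpoint formulas appear on the trace
    arbitrarily late. *)
Lemma fixpoint_after N : exists n, N <= n /\ isfix (tau n).
Proof.
  apply NNPP; intros Hno.
  assert (Hdecr : forall k, size (tau (N + k)) + k <= size (tau N)).
  { induction k as [|k IH]; [replace (N + 0) with N by lia; lia|].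
    assert (Hnf : ~ isfix (tau (N + k))) by (intros Hf; apply Hno; exists (N + k); split; [lia|exact Hf]).
    assert (size (tau (S (N + k))) < size (tau (N + k))).
    { destruct (Htrace (N + k)); simpl; try lia. exfalso; apply Hnf; do 3 eexists; eauto. }
    replace (N + S k) with (S (N + k)) by lia; lia. }
  specialize (Hdecr (S (size (tau N)))). lia.
Qed.

(** The dominant formula: a recurring fixpoint formula of least size.  From its first
    occurrence after the point where all members of the trace recur, it occurs freely in
    every member of the trace, since regaining it would require unfolding a smaller
    recurring fixpoint formula. *)
Lemma dominant_formula : tidy (tau 0) ->
  exists xi M, isfix xi /\ tau M = xi /\ inf_often tau xi /\
    forall k, M <= k -> occurs xi (tau k).
Proof.
  intros Ht.
  destruct (eventually_recurring (closure (tau 0) [])) as [N0 HN0].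
  assert (Hrec : forall n, N0 <= n -> inf_often tau (tau n)).
  { intros; apply HN0; auto; apply trace_in_closure; auto. }
  destruct (dec_inh_nat_subset_has_unique_least_element
              (fun s => exists G, isfix G /\ inf_often tau G /\ size G = s))
    as [s [[(xi & Hfix & Hinf & <-) Hmin] _]].
  { intros; apply classic. }
  { destruct (fixpoint_after N0) as (n & Hn & Hf). exists (size (tau n)), (tau n); auto. }
  destruct (Hinf N0) as (M & HM & HMe).
  exists xi, M; repeat split; auto.
  intros k Hk. destruct (Hinf k) as (k' & Hk' & Hk'e).
  apply (backward_propagation (fun n => occurs xi (tau n)) k) with (d := k' - k).
  - intros j Hj Hocc. apply NNPP; intros Hnocc.
    destruct (occurs_gained_by_unfolding _ _ _ (Htrace j) Hocc Hnocc) as [Hfj Hlt].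
    assert (size xi <= size (tau j)) by (apply Hmin; exists (tau j); split; auto; split; auto; apply Hrec; lia).
    lia.
  - replace (k + (k' - k)) with k' by lia. rewrite Hk'e; constructor.
Qed.

Lemma guarded_suffix xi M : (forall k, M <= k -> occurs xi (tau k)) ->
  forall i j, M <= i -> i <= j -> steps_in xi (tau i) (tau j).
Proof.
  intros Hocc i j Hi Hij. replace j with (i + (j - i)) by lia.
  clear Hij. generalize (j - i) as d; intros d; revert i Hi.
  induction d as [|d IH]; intros i Hi.
  - rewrite Nat.add_0_r. constructor. apply occurs_fsub, Hocc; lia.
  - econstructor; [apply occurs_fsub, Hocc; lia | apply Htrace |].
    replace (i + S d) with (S i + d) by lia. apply IH; lia.
Qed.

(** Two recurring formulas that both eventually guard the trace coincide: each is a free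
    subformula of the other. *)
Lemma eventual_guard_unique xi xi' : inf_often tau xi -> inf_often tau xi' ->
  (exists N, forall n, N <= n -> steps_in xi xi (tau n)) ->
  (exists N, forall n, N <= n -> steps_in xi' xi' (tau n)) -> xi' = xi.
Proof.
  intros Hinf Hinf' [N HN] [N' HN'].
  destruct (Hinf' (max N N')) as (n1 & Hn1 & E1).
  destruct (Hinf (max N N')) as (n2 & Hn2 & E2).
  pose proof (steps_in_last _ _ _ (HN n1 ltac:(lia))) as F1. rewrite E1 in F1.
  pose proof (steps_in_last _ _ _ (HN' n2 ltac:(lia))) as F2. rewrite E2 in F2.
  symmetry; apply fsub_antisym; auto.
Qed.

Lemma recurring_below_guard xi M phi : isfix xi -> inf_often tau xi ->
  (forall n, M <= n -> steps_in xi xi (tau n)) -> inf_often tau phi ->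
  clos_eq phi xi /\ (isfix phi -> phi <> xi -> sqlt phi xi).
Proof.
  intros Hfix Hinf Hguard Hphi.
  destruct (Hphi 0) as (i & _ & Ei). destruct (Hinf i) as (j & Hj & Ej).
  destruct (Hphi j) as (k & Hk & Ek). destruct (Hphi M) as (n & Hn & En).
  split; [split; [rewrite <- Ei, <- Ej | rewrite <- Ej, <- Ek]; apply trace_steps; auto|].
  intros Hfphi Hne. pose proof (Hguard n Hn) as Hsteps. rewrite En in Hsteps.
  split; [repeat split; auto|].
  intros (_ & _ & Hback). apply Hne, fsub_antisym; eapply steps_in_last; eauto.
Qed.
End Trace.

(** The closure order: strict steps decrease size (a guard is a free subformula of every
    formula it guards), which bounds the length of chains and makes [sqlt] transitive. *)

Lemma sqle_refl a : isfix a -> sqle a a.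
Proof. intros; repeat split; auto. constructor. apply fsub_refl. Qed.

Lemma sqlt_size a b : sqlt a b -> size b < size a.
Proof.
  intros [(Ha & Hb & Hs) Hn]. apply steps_in_last, fsub_size in Hs as [->|]; auto.
  exfalso; apply Hn, sqle_refl; auto.
Qed.

Lemma sqlt_trans a b c : sqlt a b -> sqlt b c -> sqlt a c.
Proof.
  intros Hab Hbc. pose proof (sqlt_size _ _ Hab). pose proof (sqlt_size _ _ Hbc).
  destruct Hab as [(Ha & _ & Hsab) _], Hbc as [(_ & Hc & Hsbc) _].
  split; [repeat split; auto; eapply steps_in_trans; eauto|].
  intros (_ & _ & Hsca). apply steps_in_last, fsub_size in Hsca as [->|]; lia.
Qed.

Lemma chain_length_le_size l a : chain_rel (a :: l) -> length (a :: l) <= size a.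
Proof.
  revert a; induction l as [|b l IH]; intros a H; simpl; [destruct a; simpl; lia|].
  destruct H as [Hab [_ Hrest]]. specialize (IH b Hrest). pose proof (sqlt_size _ _ Hab).
  simpl in IH; lia.
Qed.

Lemma alt_chain_cons a b l : tidy a -> sqlt a b -> alternates a b ->
  alt_chain (b :: l) -> alt_chain (a :: b :: l).
Proof.
  intros Ht Hlt Halt [Hall Hrel]. split; [constructor; auto; split; auto; apply Hlt|].
  simpl; auto.
Qed.

Lemma bounded_max_exists (P : nat -> Prop) B : (exists n, P n) -> (forall n, P n -> n <= B) ->
  exists n, P n /\ forall m, P m -> m <= n.
Proof.
  revert P; induction B as [|B IH]; intros P [n Hn] Hb.
  - exists n; split; auto; intros m Hm; pose proof (Hb m Hm); pose proof (Hb n Hn); lia.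
  - destruct (classic (P (S B))) as [HB|HB]; [exists (S B); split; auto|].
    apply IH; eauto. intros m Hm. specialize (Hb m Hm).
    destruct (Nat.eq_dec m (S B)); subst; [contradiction | lia].
Qed.

Lemma natmax_spec (P : nat -> Prop) B : (exists n, P n) -> (forall n, P n -> n <= B) ->
  P (natmax P) /\ forall m, P m -> m <= natmax P.
Proof. intros; unfold natmax; apply epsilon_spec, (bounded_max_exists P B); auto. Qed.

Lemma zmax_eq (P : Z -> Prop) v : P v -> (forall m, P m -> (m <= v)%Z) -> zmax P = v.
Proof.
  intros Hv Hub. unfold zmax.
  destruct (epsilon_spec (inhabits 0%Z) (fun n => P n /\ forall m, P m -> (m <= n)%Z))
    as [H1 H2]; [exists v; auto|].
  apply Z.le_antisymm; auto.
Qed.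

Lemma hup_spec phi : tidy phi -> isfix phi ->
  (exists l, alt_chain l /\ length l = hup phi /\ hd_error l = Some phi) /\
  forall l, alt_chain l -> hd_error l = Some phi -> length l <= hup phi.
Proof.
  intros Ht Hf.
  destruct (natmax_spec (fun n => exists l, alt_chain l /\ length l = n /\ hd_error l = Some phi)
              (size phi)) as [Hattained Hbound].
  - exists 1, [phi]. repeat split; simpl; auto.
  - intros n (l & [_ Hc] & <- & Hh). destruct l; inversion Hh; subst.
    apply chain_length_le_size; auto.
  - split; auto. intros l Hl Hh. apply Hbound; eauto.
Qed.

Lemma hup_alternating_below phi X : tidy phi -> tidy X -> sqlt phi X -> alternates phi X ->
  S (hup X) <= hup phi.
Proof.
  intros Htp HtX Hlt Halt. pose proof Hlt as [(Hfp & HfX & _) _].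
  destruct (hup_spec X HtX HfX) as [(l & Hl & Hlen & Hhd) _].
  destruct l as [|X0 l]; inversion Hhd; subst.
  rewrite <- Hlen. apply (proj2 (hup_spec phi Htp Hfp) (phi :: X :: l)); auto.
  apply alt_chain_cons; auto.
Qed.

(** Below [X] with the same type, [phi] can replace [X] at the head of any chain from [X]. *)
Lemma hup_same_type_below e x1 c1 x c : tidy (Fp e x1 c1) -> tidy (Fp e x c) ->
  sqlt (Fp e x1 c1) (Fp e x c) -> hup (Fp e x c) <= hup (Fp e x1 c1).
Proof.
  intros Htp HtX Hlt. set (phi := Fp e x1 c1) in *. set (X := Fp e x c) in *.
  assert (Hfp : isfix phi) by (do 3 eexists; reflexivity).
  assert (HfX : isfix X) by (do 3 eexists; reflexivity).
  destruct (hup_spec X HtX HfX) as [(l & [Hall Hrel] & Hlen & Hhd) _].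
  destruct l as [|X0 l]; inversion Hhd; subst X0.
  rewrite <- Hlen. apply (proj2 (hup_spec phi Htp Hfp) (phi :: l)); auto.
  destruct l as [|b l]; [repeat constructor; auto|].
  destruct Hrel as (HXb & (e' & y1 & y2 & d1 & d2 & EX & Eb) & Hrest).
  inversion EX; subst e'.
  apply alt_chain_cons; [auto | eapply sqlt_trans; eauto | | split; auto; inversion Hall; auto].
  exists e, x1, y2, c1, d2; auto.
Qed.

Lemma cd_cluster phi X : clos_eq phi X -> cd phi = cd X.
Proof.
  intros [HpX HXp]. unfold cd. f_equal. apply functional_extensionality; intro n.
  assert (Hsame : forall f, clos_eq f phi <-> clos_eq f X).
  { intros f; split; intros [Ha Hb]; split; eapply rt_trans; eauto. }
  apply propositional_extensionality.
  split; intros (l & Hl & Hlen & Hall); exists l; (split; [exact Hl | split; [exact Hlen |]]);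
    (eapply Forall_impl; [|exact Hall]); intros f; apply Hsame.
Qed.

Definition parity_adjust (e : fptype) (d : Z) : Z :=
  if Bool.eqb (Z.even d) (is_nu e) then d else (d + 1)%Z.

Lemma Omega_g_Fp e x a : Omega_g (Fp e x a) =
  parity_adjust e (Z.of_nat (cd (Fp e x a)) - Z.of_nat (hup (Fp e x a))).
Proof. reflexivity. Qed.

Lemma parity_adjust_even e d : Z.even (parity_adjust e d) = is_nu e.
Proof.
  unfold parity_adjust. destruct (Bool.eqb (Z.even d) (is_nu e)) eqn:E.
  - apply Bool.eqb_prop in E; auto.
  - rewrite Z.even_add. destruct (Z.even d), e; simpl in *; auto; discriminate.
Qed.

Lemma parity_adjust_bounds e d : (d <= parity_adjust e d <= d + 1)%Z.
Proof. unfold parity_adjust; destruct (Bool.eqb _ _); lia. Qed.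

Lemma parity_adjust_mono e d1 d2 : (d1 <= d2)%Z -> (parity_adjust e d1 <= parity_adjust e d2)%Z.
Proof.
  intros H. destruct (Z.eq_dec d1 d2) as [->|]; [lia|].
  pose proof (parity_adjust_bounds e d1); pose proof (parity_adjust_bounds e d2). lia.
Qed.

(** A fixpoint formula strictly below [X] in the cluster of [X] has priority at most
    [Omega_g X]: its height is at least that of [X], and strictly larger when the types
    differ, which absorbs the parity correction. *)
Lemma Omega_g_below phi X : tidy phi -> tidy X -> sqlt phi X -> clos_eq phi X ->
  (Omega_g phi <= Omega_g X)%Z.
Proof.
  intros Htp HtX Hlt Hce. pose proof Hlt as [((e1 & x1 & c1 & ->) & (e & x & c & ->) & _) _].
  rewrite !Omega_g_Fp, (cd_cluster _ _ Hce).
  assert (Hdec : {e1 = e} + {e1 <> e}) by decide equality.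
  destruct Hdec as [<-|Hne].
  - apply parity_adjust_mono. pose proof (hup_same_type_below e1 x1 c1 x c Htp HtX Hlt). lia.
  - assert (Halt : alternates (Fp e1 x1 c1) (Fp e x c)).
    { exists e1, x1, x, c1, c. split; auto. destruct e, e1; simpl; congruence. }
    pose proof (hup_alternating_below _ _ Htp HtX Hlt Halt).
    pose proof (parity_adjust_bounds e1
      (Z.of_nat (cd (Fp e x c)) - Z.of_nat (hup (Fp e1 x1 c1)))).
    pose proof (parity_adjust_bounds e
      (Z.of_nat (cd (Fp e x c)) - Z.of_nat (hup (Fp e x c)))).
    lia.
Qed.

Theorem mainTheorem5 (tau : nat -> form) :
  is_trace tau -> (forall n, tidy (tau n)) ->
  exists e x chi,
    let xi := Fp e x chi in
    (inf_often tau xi /\ (exists N, forall n, N <= n -> steps_in xi xi (tau n)) /\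
     (forall xi', isfix xi' -> inf_often tau xi' ->
        (exists N, forall n, N <= n -> steps_in xi' xi' (tau n)) -> xi' = xi)) /\
    (Z.even (zmax (fun z => exists phi, isfix phi /\ inf_often tau phi /\ z = Omega_g phi))
       = true <-> e = nu).
Proof.
  intros Htrace Htidy.
  destruct (dominant_formula tau Htrace (Htidy 0))
    as (xi & M & Hfix & HM & Hinf & Hocc).
  assert (Hguard : forall n, M <= n -> steps_in xi xi (tau n)).
  { intros n Hn. pose proof (guarded_suffix tau Htrace xi M Hocc M n (le_n M) Hn) as Hs.
    rewrite HM in Hs; exact Hs. }
  assert (Htidy_rec : forall phi, inf_often tau phi -> tidy phi).
  { intros phi Hphi. destruct (Hphi 0) as (n & _ & <-). auto. }
  assert (Hmax : zmax (fun z => exists phi, isfix phi /\ inf_often tau phi /\ z = Omega_g phi)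
                 = Omega_g xi).
  { apply zmax_eq; [exists xi; auto|].
    intros m (phi & Hfphi & Hphi & ->).
    destruct (classic (phi = xi)) as [->|Hne]; [lia|].
    destruct (recurring_below_guard tau Htrace xi M phi Hfix Hinf Hguard Hphi) as [Hce Hlt].
    apply Omega_g_below; auto. }
  destruct Hfix as (e & x & chi & ->). exists e, x, chi; cbv zeta.
  split; [split; [exact Hinf | split; [exists M; exact Hguard |]] |].
  - intros xi' _ Hinf' Hguard'.
    apply (eventual_guard_unique tau); eauto.
  - rewrite Hmax, Omega_g_Fp, parity_adjust_even. destruct e; simpl; split; congruence.
Qed.
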